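(* Let $1\le p\le 2$, let $\theta_c\in[0,\frac{\pi}{2}]$ be the angle with $\cos^2\theta_c=\frac{p-1}{p}$, and let $G(\theta)=\cos^{p-1}(\theta)\sin(\theta)$ on $[0,\frac{\pi}{2}]$. Then: (a) $G$ is increasing on $[0,\theta_c]$ and decreasing on $[\theta_c,\frac{\pi}{2}]$. (b) For $0\le\theta\le\frac{\pi}{4}$ we have $G(\frac{\pi}{2}-\theta)\ge G(\theta)$, with equality only at the endpoints. (c) If $1\le p\le 1.73$, then for every $\alpha>0$ with $\theta_c+\alpha<\frac{\pi}{2}$, $G(\theta_c-\alpha)\ge G(\theta_c+\alpha)$. (d) If $1\le p\le 1.73$ and $x\le\theta_c\le y$ (in $[0,\frac{\pi}{2}]$) satisfy $G(x)=G(y)$, then $\frac{1}{2}(x+y)\le\theta_c$. *)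

From mathcomp Require Import all_boot all_order all_algebra.
From mathcomp Require Import all_classical all_reals all_analysis.
Set Implicit Arguments. Unset Strict Implicit. Unset Printing Implicit Defensive.
Import Order.TTheory GRing.Theory Num.Theory.
Local Open Scope ring_scope.

(* G(theta) = cos(theta)^(p-1) * sin(theta), real exponent via powR
   (with the convention 0 `^ 0 = 1, so for p = 1, G = sin). *)
Definition Gfun (R : realType) (p : R) (t : R) : R :=
  powR (cos t) (p - 1) * sin t.

From mathcomp Require Import all_boot all_order all_algebra.
From mathcomp Require Import all_classical all_reals all_analysis.
From mathcomp Require Import ring lra.
Import Order.TTheory GRing.Theory Num.Theory numFieldNormedType.Exports.
Local Open Scope ring_scope.

(** On ]0, pi/2[, G = exp lnG with lnG t = (p - 1) ln (cos t) + ln (sin t), and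
   lnG' = cot - (p - 1) tan = p (cos^2 t - cos^2 thc) / (sin t cos t) changes sign at thc,
   which gives (a); (b) is lnG (pi/2 - t) - lnG t = (2 - p) (ln (cos t) - ln (sin t)).
   For (c), with u = thc - z and v = thc + z,
     lnG' u + lnG' v = sin (u + v) (cos u cos v - (p - 1) sin u sin v) / (sin u cos u sin v cos v)
   and the middle factor is cos^2 thc - (p - 1) sin^2 thc - (2 - p) sin^2 z = -(2 - p) sin^2 z,
   so lnG (thc - z) - lnG (thc + z) increases with z.  For p = 1, G = sin and thc = pi/2. *)

Section monotone_by_derivative.
Context {R : realType}.
Variables (f df : R -> R) (a b : R).
Hypothesis f_derive : forall z, a <= z <= b -> is_derive z 1 f (df z).

Let f_derive_in z : z \in `]a, b[ -> derivable f z 1 /\ derive1 f z = df z.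
Proof.
rewrite in_itv/= derive1E => /andP[az zb].
by have /f_derive[] : a <= z <= b by rewrite !ltW.
Qed.

Let f_continuous : {within [set` `[a, b]%R], continuous f}%classic.
Proof. by apply: derivable_within_continuous => z /[!in_itv] /f_derive[]. Qed.

Let ab_in : a <= b -> (a \in `[a, b]) && (b \in `[a, b]).
Proof. by move=> ab; rewrite !in_itv/= !lexx ab. Qed.

Lemma derive_gt0_ltr : (forall z, a < z < b -> 0 < df z) -> a < b -> f a < f b.
Proof.
move=> df_gt0 ab; have /andP[aab bab] := ab_in (ltW ab).
apply: (gtr0_derive1_lt_cc _ _ f_continuous) => // [z /f_derive_in[]//|z zab].
have [_ ->] := f_derive_in _ zab.
by apply: df_gt0; rewrite -[_ < _ < _]/(z \in `]a, b[).
Qed.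

Lemma derive_ge0_ler : (forall z, a < z < b -> 0 <= df z) -> a <= b -> f a <= f b.
Proof.
move=> df_ge0 ab; have /andP[aab bab] := ab_in ab.
apply: (ger0_derive1_le_cc _ _ f_continuous) => // [z /f_derive_in[]//|z zab].
have [_ ->] := f_derive_in _ zab.
by apply: df_ge0; rewrite -[_ < _ < _]/(z \in `]a, b[).
Qed.

End monotone_by_derivative.

Section monotone_by_derivative_variants.
Context {R : realType}.
Implicit Types (f df : R -> R) (a b : R).

Lemma derive_lt0_gtr f df a b :
  (forall z, a <= z <= b -> is_derive z 1 f (df z)) ->
  (forall z, a < z < b -> df z < 0) -> a < b -> f b < f a.
Proof.
move=> f_derive df_lt0 ab; rewrite -ltrN2.
apply: (@derive_gt0_ltr _ (- f) (fun z => - df z)) => // [z /f_derive|z /df_lt0].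
  exact: is_deriveN.
by rewrite oppr_gt0.
Qed.

Lemma derive_sym_ler f df (c h : R) :
  (forall z, c - h <= z <= c + h -> is_derive z 1 f (df z)) ->
  (forall z, 0 < z < h -> df (c - z) + df (c + z) <= 0) -> 0 <= h ->
  f (c + h) <= f (c - h).
Proof.
move=> f_der df_sym h_ge0.
pose g z := f (c - z) - f (c + z).
suff : g 0 <= g h by rewrite /g subr0 addr0 subrr subr_ge0.
apply: (@derive_ge0_ler _ g (fun z => - df (c - z) - df (c + z))) => //.
  move=> z zh.
  have -> : - df (c - z) - df (c + z) = df (c - z) * -1 - df (c + z) * 1 by ring.
  apply: is_deriveB; apply: is_derive1_comp; try (apply: f_der; lra).
    by rewrite -[-1]sub0r; apply: is_deriveB.
  by have := is_deriveD (is_derive_cst c z 1) (is_derive_id z 1); rewrite add0r.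
by move=> z /df_sym; lra.
Qed.

End monotone_by_derivative_variants.

Section trigonometry.
Context {R : realType}.
Implicit Types t x y : R.

Lemma sin_cos_gt0 t : 0 < t < pi / 2 -> 0 < sin t /\ 0 < cos t.
Proof.
move=> t_itv; split; first exact: sin_gt0_pihalf.
by apply: cos_gt0_pihalf; have := @pi_gt0 R; lra.
Qed.

Lemma sin_pihalfB t : sin (pi / 2 - t) = cos t.
Proof. by rewrite sinB sin_pihalf cos_pihalf mul1r mul0r subr0. Qed.

Lemma cos_pihalfB t : cos (pi / 2 - t) = sin t.
Proof. by rewrite cosB sin_pihalf cos_pihalf mul1r mul0r add0r. Qed.

Lemma ltr_sin_cos t : 0 <= t <= pi / 2 -> (sin t < cos t) = (t < pi / 4).
Proof.
move=> t_itv; have := @pi_gt0 R => pi_gt0.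
rewrite -sin_pihalfB ltr_sin ?in_itv/=; first by apply/idP/idP; lra.
all: by apply/andP; split; lra.
Qed.

Lemma ler_sin_cos t : 0 <= t <= pi / 2 -> (sin t <= cos t) = (t <= pi / 4).
Proof.
move=> t_itv; have := @pi_gt0 R => pi_gt0.
rewrite -sin_pihalfB leNgt ltr_sin ?in_itv/=; first by apply/idP/idP; lra.
all: by apply/andP; split; lra.
Qed.

Lemma ltr_cos2 x y : 0 <= x <= pi / 2 -> 0 <= y <= pi / 2 ->
  (cos x ^+ 2 < cos y ^+ 2) = (y < x).
Proof.
move=> x_itv y_itv; have := @pi_gt0 R => pi_gt0.
have cos_ge0 t : 0 <= t <= pi / 2 -> cos t \is Num.nneg.
  by move=> t_itv; rewrite nnegrE cos_ge0_pihalf //; lra.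
rewrite (ltr_sqr (cos_ge0 _ x_itv) (cos_ge0 _ y_itv)) ltr_cos // in_itv/=; lra.
Qed.

Lemma cos_eq0_pihalf t : 0 <= t <= pi / 2 -> cos t = 0 -> t = pi / 2.
Proof.
move=> t_itv cos_t0; have := @pi_gt0 R => pi_gt0.
by apply: cos_inj; rewrite ?cos_pihalf // in_itv/=; lra.
Qed.

Lemma cosBcosD x y : cos (x - y) * cos (x + y) = cos x ^+ 2 - sin y ^+ 2.
Proof.
transitivity (cos x ^+ 2 * cos y ^+ 2 - sin x ^+ 2 * sin y ^+ 2).
  by rewrite cosB cosD; ring.
by rewrite (cos2sin2 y) (sin2cos2 x); ring.
Qed.

Lemma sinBsinD x y : sin (x - y) * sin (x + y) = sin x ^+ 2 - sin y ^+ 2.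
Proof.
transitivity (sin x ^+ 2 * cos y ^+ 2 - cos x ^+ 2 * sin y ^+ 2).
  by rewrite sinB sinD; ring.
by rewrite (cos2sin2 y) (cos2sin2 x); ring.
Qed.

End trigonometry.

Section log_of_G.
Context {R : realType}.
Variable p : R.
Implicit Types t u v : R.

Definition lnG t := (p - 1) * ln (cos t) + ln (sin t).

Definition lnG' t := cos t / sin t - (p - 1) * (sin t / cos t).

Lemma Gfun_expR t : 0 < t < pi / 2 -> Gfun p t = expR (lnG t).
Proof.
by case/sin_cos_gt0 => sin_gt0 cos_gt0; rewrite /Gfun /powR gt_eqF // expRD lnK.
Qed.

Lemma Gfun_gt0 t : 0 < t < pi / 2 -> 0 < Gfun p t.
Proof. by move/Gfun_expR->; apply: expR_gt0. Qed.

Lemma Gfun0 : Gfun p 0 = 0.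
Proof. by rewrite /Gfun sin0 mulr0. Qed.

Lemma Gfun_pihalf : p != 1 -> Gfun p (pi / 2) = 0.
Proof. by move=> p_neq1; rewrite /Gfun cos_pihalf powR0 ?mul0r // subr_eq0. Qed.

Lemma is_derive_lnG t : 0 < t < pi / 2 -> is_derive t 1 lnG (lnG' t).
Proof.
case/sin_cos_gt0 => sin_gt0 cos_gt0.
have -> : lnG' t = (p - 1) * ((cos t)^-1 * - sin t) + (sin t)^-1 * cos t.
  by rewrite /lnG'; field; rewrite !gt_eqF.
exact: is_deriveD (is_deriveZ (p - 1) (is_derive1_comp (is_derive1_ln cos_gt0) _))
  (is_derive1_comp (is_derive1_ln sin_gt0) _).
Qed.

Lemma lnG'E t : sin t != 0 -> cos t != 0 ->
  lnG' t = (cos t ^+ 2 - (p - 1) * sin t ^+ 2) / (sin t * cos t).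
Proof. by move=> sin_neq0 cos_neq0; rewrite /lnG'; field; rewrite sin_neq0 cos_neq0. Qed.

Lemma lnG'D u v : sin u != 0 -> cos u != 0 -> sin v != 0 -> cos v != 0 ->
  lnG' u + lnG' v = sin (u + v) *
    (cos u * cos v - (p - 1) * (sin u * sin v)) / (sin u * cos u * (sin v * cos v)).
Proof.
move=> su cu sv cv; rewrite /lnG' sinD.
by field; rewrite su cu sv cv.
Qed.

Lemma lnG_pihalfB t : lnG (pi / 2 - t) - lnG t = (2 - p) * (ln (cos t) - ln (sin t)).
Proof. by rewrite /lnG sin_pihalfB cos_pihalfB; ring. Qed.

End log_of_G.

Lemma Gfun1 {R : realType} (t : R) : Gfun 1 t = sin t.
Proof. by rewrite /Gfun subrr powRr0 mul1r. Qed.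

Section symmetry_about_pi_quarter.
Context {R : realType}.
Variable p : R.
Implicit Types t : R.

Lemma Gfun_le_pihalfB t : p <= 2 -> 0 <= t <= pi / 4 -> Gfun p t <= Gfun p (pi / 2 - t).
Proof.
move=> p_le2 /andP[t_ge0 t_le]; have := @pi_gt0 R => pi_gt0.
have [->|t_neq0] := eqVneq t 0.
  by rewrite Gfun0 subr0 /Gfun sin_pihalf mulr1 powR_ge0.
have [sin_gt0 cos_gt0] : 0 < sin t /\ 0 < cos t by apply: sin_cos_gt0; lra.
rewrite !Gfun_expR; [|lra|lra].
rewrite ler_expR -subr_ge0 lnG_pihalfB mulr_ge0 ?subr_ge0 ?ler_ln ?posrE //.
by rewrite ler_sin_cos; lra.
Qed.

Lemma Gfun_pihalfB_eq t : p < 2 -> 0 <= t <= pi / 4 ->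
  Gfun p (pi / 2 - t) = Gfun p t -> t = 0 \/ t = pi / 4.
Proof.
move=> p_lt2 /andP[t_ge0 t_le] G_eq; have := @pi_gt0 R => pi_gt0.
have [->|t_neq0] := eqVneq t 0; [by left | right].
have [sin_gt0 cos_gt0] : 0 < sin t /\ 0 < cos t by apply: sin_cos_gt0; lra.
move: G_eq; rewrite !Gfun_expR; [|lra|lra].
move/expR_inj/eqP; rewrite -subr_eq0 lnG_pihalfB mulf_eq0 !subr_eq0.
case/orP=> [/eqP|/eqP ln_eq]; first lra.
have cos_eq_sin : cos t = sin t by apply: ln_inj; rewrite ?posrE.
suff: ~~ (t < pi / 4) by lra.
by rewrite -ltr_sin_cos ?cos_eq_sin ?ltxx //; lra.
Qed.

End symmetry_about_pi_quarter.

Section critical_angle.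
Context {R : realType}.
Variables p thc : R.
Hypotheses (p_gt1 : 1 < p) (p_le2 : p <= 2).
Hypotheses (thc_ge0 : 0 <= thc) (thc_le_pihalf : thc <= pi / 2).
Hypothesis cos2_thc : cos thc ^+ 2 = (p - 1) / p.

Let p_gt0 : 0 < p. Proof. by move: p_gt1; lra. Qed.
Let p1_le1 : p - 1 <= 1. Proof. by move: p_le2; lra. Qed.

Lemma crit_sin2 : (p - 1) * sin thc ^+ 2 = cos thc ^+ 2.
Proof. by rewrite sin2cos2 cos2_thc; field; rewrite gt_eqF. Qed.

Lemma thc_itv : 0 < thc < pi / 2.
Proof.
have p_frac : 0 < (p - 1) / p < 1.
  by rewrite divr_gt0 ?subr_gt0 //= ltr_pdivrMr // mul1r ltrBlDr ltrDl.
rewrite !lt_neqAle thc_ge0 thc_le_pihalf !andbT; apply/andP; split.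
  by apply/eqP => thc0; move: cos2_thc; rewrite -thc0 cos0 expr1n; lra.
by apply/eqP => thc_pi2; move: cos2_thc; rewrite thc_pi2 cos_pihalf expr0n /=; lra.
Qed.

Lemma piquarter_le_thc : pi / 4 <= thc.
Proof.
have [sin_gt0 cos_gt0] := sin_cos_gt0 _ thc_itv.
rewrite leNgt -ltr_sin_cos ?thc_ge0 //; apply/negP => sin_lt_cos.
have : cos thc ^+ 2 <= sin thc ^+ 2.
  by rewrite -crit_sin2; apply: ler_piMl; [exact: sqr_ge0 | exact: p1_le1].
nra.
Qed.

Lemma lnG'_crit z : sin z != 0 -> cos z != 0 ->
  lnG' p z = p * (cos z ^+ 2 - cos thc ^+ 2) / (sin z * cos z).
Proof.
move=> sin_neq0 cos_neq0; rewrite lnG'E // sin2cos2 cos2_thc.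
by field; rewrite sin_neq0 cos_neq0 gt_eqF.
Qed.

Lemma lnG'_gt0 z : 0 < z < thc -> 0 < lnG' p z.
Proof.
move=> z_itv; have /andP[thc_gt0 thc_lt] := thc_itv; have := @pi_gt0 R => pi_gt0.
have [sin_gt0 cos_gt0] : 0 < sin z /\ 0 < cos z by apply: sin_cos_gt0; lra.
rewrite lnG'_crit ?gt_eqF // divr_gt0 ?mulr_gt0 // subr_gt0 ltr_cos2 //; lra.
Qed.

Lemma lnG'_lt0 z : thc < z < pi / 2 -> lnG' p z < 0.
Proof.
move=> z_itv; have /andP[thc_gt0 thc_lt] := thc_itv; have := @pi_gt0 R => pi_gt0.
have [sin_gt0 cos_gt0] : 0 < sin z /\ 0 < cos z by apply: sin_cos_gt0; lra.
rewrite lnG'_crit ?gt_eqF // pmulr_llt0 ?invr_gt0 ?mulr_gt0 // pmulr_rlt0 //.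
rewrite subr_lt0 ltr_cos2 //; lra.
Qed.

Lemma Gfun_ltr_before x y : 0 <= x -> x < y -> y <= thc -> Gfun p x < Gfun p y.
Proof.
move=> x_ge0 xy y_le; have /andP[thc_gt0 thc_lt] := thc_itv.
have [->|x_neq0] := eqVneq x 0; first by rewrite Gfun0 Gfun_gt0 //; lra.
have x_gt0 : 0 < x by rewrite lt_def x_neq0.
rewrite !Gfun_expR ?ltr_expR; [|lra|lra].
apply: (@derive_gt0_ltr _ _ (lnG' p)) => // z z_itv.
  by apply: is_derive_lnG; lra.
by apply: lnG'_gt0; lra.
Qed.

Lemma Gfun_gtr_after x y : thc <= x -> x < y -> y <= pi / 2 -> Gfun p y < Gfun p x.
Proof.
move=> x_ge xy y_le; have /andP[thc_gt0 thc_lt] := thc_itv.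
have [->|y_neq] := eqVneq y (pi / 2).
  by rewrite Gfun_pihalf ?gt_eqF // Gfun_gt0 //; lra.
have y_lt : y < pi / 2 by rewrite lt_neqAle y_neq.
rewrite !Gfun_expR ?ltr_expR; [|lra|lra].
apply: (@derive_lt0_gtr _ _ (lnG' p)) => // z z_itv.
  by apply: is_derive_lnG; lra.
by apply: lnG'_lt0; lra.
Qed.

Lemma lnG'_sym_le0 z : 0 < z -> thc + z < pi / 2 ->
  lnG' p (thc - z) + lnG' p (thc + z) <= 0.
Proof.
move=> z_gt0 z_lt; have /andP[thc_gt0 thc_lt] := thc_itv.
have := piquarter_le_thc; have := @pi_gt0 R => pi_gt0 pi4_le.
have [s1 c1] : 0 < sin (thc - z) /\ 0 < cos (thc - z) by apply: sin_cos_gt0; lra.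
have [s2 c2] : 0 < sin (thc + z) /\ 0 < cos (thc + z) by apply: sin_cos_gt0; lra.
rewrite lnG'D ?gt_eqF // cosBcosD sinBsinD.
have -> : cos thc ^+ 2 - sin z ^+ 2 - (p - 1) * (sin thc ^+ 2 - sin z ^+ 2) =
          - ((2 - p) * sin z ^+ 2) by rewrite -crit_sin2; ring.
rewrite mulrN mulNr oppr_le0; apply: divr_ge0; last by rewrite !mulr_ge0 // ltW.
apply: mulr_ge0; last by rewrite mulr_ge0 ?sqr_ge0 ?subr_ge0.
by rewrite ltW // sin_gt0_pi //; lra.
Qed.

Lemma Gfun_crit_sym a : 0 < a -> thc + a < pi / 2 -> Gfun p (thc + a) <= Gfun p (thc - a).
Proof.
move=> a_gt0 a_lt; have /andP[thc_gt0 thc_lt] := thc_itv; have := piquarter_le_thc.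
have := @pi_gt0 R => pi_gt0 pi4_le.
rewrite !Gfun_expR ?ler_expR; [|lra|lra].
apply: (@derive_sym_ler _ _ (lnG' p)) => [z z_itv|z z_itv|]; last lra.
  by apply: is_derive_lnG; lra.
by apply: lnG'_sym_le0; lra.
Qed.

Lemma Gfun_midpoint x y : 0 <= x -> x <= thc -> thc <= y -> y <= pi / 2 ->
  Gfun p x = Gfun p y -> (x + y) / 2 <= thc.
Proof.
move=> x_ge0 x_le y_ge y_le G_eq; rewrite leNgt; apply/negP => mid_gt.
have /andP[thc_gt0 thc_lt] := thc_itv; have := piquarter_le_thc.
have := @pi_gt0 R => pi_gt0 pi4_le.
have [y_lt|y_ge'] := ltP y (pi / 2).
  pose a := y - thc.
  have G_le : Gfun p y <= Gfun p (thc - a).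
    by have := @Gfun_crit_sym a; rewrite /a subrKC; apply; lra.
  have G_lt : Gfun p (thc - a) < Gfun p x by apply: Gfun_ltr_before; rewrite /a; lra.
  by move: G_le G_lt; rewrite G_eq; lra.
have [x_eq0|x_neq0] := eqVneq x 0; first lra.
have x_gt0 : 0 < x by rewrite lt_def x_neq0.
have : 0 < Gfun p x by apply: Gfun_gt0; lra.
by rewrite G_eq (_ : y = pi / 2) ?Gfun_pihalf ?gt_eqF ?ltxx //; lra.
Qed.

End critical_angle.

Theorem lemma2p3 (R : realType) (p thc : R) :
  1 <= p <= 2 ->
  0 <= thc <= pi / 2 ->
  cos thc ^+ 2 = (p - 1) / p ->
  (* (a) *)
  ((forall x y : R, 0 <= x -> x < y -> y <= thc -> Gfun p x < Gfun p y) /\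
   (forall x y : R, thc <= x -> x < y -> y <= pi / 2 -> Gfun p y < Gfun p x)) /\
  (* (b) *)
  (forall t : R, 0 <= t <= pi / 4 ->
     Gfun p t <= Gfun p (pi / 2 - t) /\
     (p < 2 -> Gfun p (pi / 2 - t) = Gfun p t -> t = 0 \/ t = pi / 4)) /\
  (* (c) *)
  (p <= 173 / 100 ->
   forall a : R, 0 < a -> thc + a < pi / 2 ->
     Gfun p (thc + a) <= Gfun p (thc - a)) /\
  (* (d) *)
  (p <= 173 / 100 ->
   forall x y : R, 0 <= x -> x <= thc -> thc <= y -> y <= pi / 2 ->
     Gfun p x = Gfun p y -> (x + y) / 2 <= thc).
Proof.
move=> /andP[p_ge1 p_le2] /andP[thc_ge0 thc_le] cos2_thc.
have sym_piquarter t : 0 <= t <= pi / 4 -> Gfun p t <= Gfun p (pi / 2 - t) /\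
    (p < 2 -> Gfun p (pi / 2 - t) = Gfun p t -> t = 0 \/ t = pi / 4).
  by move=> t_itv; split=> [|p_lt2]; [exact: Gfun_le_pihalfB | exact: Gfun_pihalfB_eq].
have [p_gt1|p_le1] := ltP 1 p.
  split; [split|split; [|split]] => //.
  - exact: Gfun_ltr_before.
  - exact: Gfun_gtr_after.
  - by move=> _; exact: Gfun_crit_sym.
  - by move=> _; exact: Gfun_midpoint.
have thc_eq : thc = pi / 2.
  apply: cos_eq0_pihalf; first by rewrite thc_ge0.
  by apply/eqP; rewrite -sqrf_eq0 cos2_thc (_ : p = 1) ?subrr ?mul0r //; lra.
have p_eq1 : p = 1 by lra.
have := @pi_gt0 R; rewrite thc_eq p_eq1 in sym_piquarter * => pi_gt0.
split; [split|split; [|split]] => //; try by move=> *; lra.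
by move=> x y x_ge0 xy y_le; rewrite !Gfun1 ltr_sin ?in_itv/=; lra.
Qed.
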